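(* In the setting of the context, if $a,b\in C$ are distinct and $g\in G_a$ is non-trivial, then $$d_a(b,gb)\ge 2^{\frac{R-2}{\delta}}-4-6\delta.$$
   Context: $X$ is a $\delta$-hyperbolic geodesic metric space ($\delta>0$, every geodesic triangle $\delta$-thin). $G$ acts on $X$ by isometries and $\mathcal{C}=(C,\{G_c\})$ is a $\rho$-separated fairly rotating family with $\rho\ge20\delta$ (i.e. $C\subseteq X$ is $G$-invariant, $G_c$ fixes $c$, $G_{gc}=gG_cg^{-1}$, distinct points of $C$ are at distance $\ge\rho$, and for $c\in C$, $g\in G_c\setminus\{1\}$, $x\in C\setminus\{c\}$ some geodesic from $x$ to $gx$ meets the closed $1$-ball about $c$). Fix $2+2\delta\le R\le\frac\rho2-3\delta$; $B_r(p)$ denotes the open ball. For $p\in C$, $S_p=\{x:d(x,p)=R\}$ with metric $d_{S_p}(x,y)=$ infimum of lengths of paths from $x$ to $y$ in $X\setminus B_R(p)$ (possibly $\infty$). For $x\in C\setminus\{p\}$, $\pi_p(x)\subseteq S_p$ is the set of points where geodesics $[p,x]$ meet $S_p$, and $d_p(x,y)=\operatorname{diam}_{S_p}(\pi_p(x)\cup\pi_p(y))$. *)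

From Stdlib Require Import Reals.
From Coquelicot Require Import Coquelicot.
Open Scope R_scope.

Section Metric.
Context {X : Type} (d : X -> X -> R).

Definition is_metric : Prop :=
  (forall x y, 0 <= d x y) /\ (forall x y, d x y = 0 <-> x = y) /\
  (forall x y, d x y = d y x) /\ (forall x y z, d x z <= d x y + d y z).

Definition geodesic (x y : X) (gam : R -> X) : Prop :=
  gam 0 = x /\ gam (d x y) = y /\
  forall s t, 0 <= s <= d x y -> 0 <= t <= d x y -> d (gam s) (gam t) = Rabs (s - t).

Definition geodesic_space : Prop := forall x y, exists gam, geodesic x y gam.

Definition gromov (y z x : X) : R := (d x y + d x z - d y z) / 2.

(* every geodesic triangle is delta-thin (tripod/insize definition,
   Bridson-Haefliger III.H.1.16): for a triangle with vertex x and sides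
   a=[x,y], b=[x,z] issued from x, points at the same distance
   t <= (y|z)_x from x on a and b are within delta.  Quantifying over all
   vertices x and all pairs of geodesics issued from x covers every vertex
   of every geodesic triangle (geodesics may be reversed). *)
Definition triangles_thin (delta : R) : Prop :=
  forall x y z a b, geodesic x y a -> geodesic x z b ->
  forall t, 0 <= t <= gromov y z x -> d (a t) (b t) <= delta.

Definition open_ball (p : X) (r : R) (x : X) : Prop := d x p < r.

Definition sphere (p : X) (r : R) (x : X) : Prop := d x p = r.

Definition path_continuous (gam : R -> X) : Prop :=
  forall t, 0 <= t <= 1 -> forall eps, 0 < eps -> exists eta, 0 < eta /\
  forall s, 0 <= s <= 1 -> Rabs (s - t) < eta -> d (gam s) (gam t) < eps.

Fixpoint poly_sum (gam : R -> X) (t : nat -> R) (n : nat) : R :=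
  match n with
  | O => 0
  | S m => poly_sum gam t m + d (gam (t m)) (gam (t (S m)))
  end.

Definition partition01 (t : nat -> R) (n : nat) : Prop :=
  t O = 0 /\ t n = 1 /\ forall i, (i < n)%nat -> t i <= t (S i).

Definition path_length (gam : R -> X) : Rbar :=
  Rbar_lub (fun l : Rbar => exists t n, partition01 t n /\ l = Finite (poly_sum gam t n)).

(* d_{S_p}(x,y): infimum of lengths of paths from x to y in X \ B_r(p);
   +oo if no such path (Rbar_glb of the empty set is p_infty) *)
Definition sphere_dist (p : X) (r : R) (x y : X) : Rbar :=
  Rbar_glb (fun l : Rbar => exists gam, path_continuous gam /\ gam 0 = x /\ gam 1 = y /\
     (forall s, 0 <= s <= 1 -> ~ open_ball p r (gam s)) /\ l = path_length gam).

Definition sphere_diam (p : X) (r : R) (A : X -> Prop) : Rbar :=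
  Rbar_lub (fun l : Rbar => exists x y, A x /\ A y /\ l = sphere_dist p r x y).

Definition proj (p : X) (r : R) (x : X) (z : X) : Prop :=
  exists gam, geodesic p x gam /\ exists t, 0 <= t <= d p x /\ gam t = z /\ sphere p r z.

Definition dproj (p : X) (r : R) (x y : X) : Rbar :=
  sphere_diam p r (fun z => proj p r x z \/ proj p r y z).

End Metric.

Definition is_group {G : Type} (mul : G -> G -> G) (inv : G -> G) (one : G) : Prop :=
  (forall a b c, mul a (mul b c) = mul (mul a b) c) /\
  (forall a, mul one a = a /\ mul a one = a) /\
  (forall a, mul (inv a) a = one /\ mul a (inv a) = one).

Definition isometric_action {G X : Type} (mul : G -> G -> G) (one : G)
  (d : X -> X -> R) (act : G -> X -> X) : Prop :=
  (forall x, act one x = x) /\ (forall g h x, act (mul g h) x = act g (act h x)) /\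
  (forall g x y, d (act g x) (act g y) = d x y).

Definition fairly_rotating_family {G X : Type} (mul : G -> G -> G) (inv : G -> G) (one : G)
  (d : X -> X -> R) (act : G -> X -> X) (C : X -> Prop) (Gc : X -> G -> Prop) (rho : R) : Prop :=
  (forall g c, C c -> C (act g c)) /\
  (forall c, C c -> Gc c one /\ (forall g h, Gc c g -> Gc c h -> Gc c (mul g h)) /\
                   (forall g, Gc c g -> Gc c (inv g))) /\
  (forall c g, C c -> Gc c g -> act g c = c) /\
  (forall c g h, C c -> (Gc (act g c) h <-> exists k, Gc c k /\ h = mul (mul g k) (inv g))) /\
  (forall c c', C c -> C c' -> c <> c' -> rho <= d c c') /\
  (forall c g x, C c -> Gc c g -> g <> one -> C x -> x <> c ->
     exists gam, geodesic d x (act g x) gam /\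
       exists t, 0 <= t <= d x (act g x) /\ d (gam t) c <= 1).

From Stdlib Require Import Reals Lra Lia Classical ZArith.
From Coquelicot Require Import Coquelicot.
Open Scope R_scope.

(* Let al be a geodesic [a,b] and be = g al, a geodesic [a,gb]; the
   points al(R), be(R) lie in pi_a(b) and pi_a(gb), so it suffices to bound
   from below the length of any path c from al(R) to be(R) outside B_R(a).
   The fairly rotating condition gives a geodesic sig = [b,gb] passing within
   1 of a.  The triangle (a,b,gb) is isosceles and thin, so c closes up, with
   four segments of length <= delta, into a path outside B_R(a) joining two
   points of sig around the point close to a.  Exponential divergence of
   geodesics (halve the path, use slim triangles, recurse k times) shows that
   every point of sig between them is at distance >= R - k delta - l/2^(k+1)
   from a, l the length of the path; taking k = floor((R-2)/delta) forces
   l >= 2^((R-2)/delta).  Continuous paths are replaced by "fine chains"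
   (discretizations with small steps), which makes the halving combinatorial. *)

Lemma floor_nat (m : R) : 0 <= m -> exists k : nat, INR k <= m < INR k + 1.
Proof.
  intros Hm. destruct (base_Int_part m) as [H1 H2].
  assert (Hz : (0 <= Int_part m)%Z).
  { assert (-1 < Int_part m)%Z by (apply lt_IZR; simpl; lra). lia. }
  exists (Z.to_nat (Int_part m)). rewrite INR_IZR_INZ, Z2Nat.id by auto. lra.
Qed.

Lemma pow2_ge1 k : 1 <= 2 ^ k.
Proof. induction k; simpl; lra. Qed.

Lemma exponent_choice r delta : 0 <= r -> 0 < delta ->
  exists k : nat, INR k * delta <= r /\ Rpower 2 (r / delta) <= 2 ^ S k.
Proof.
  intros Hr Hd.
  assert (Hq : 0 <= r / delta) by (apply Rdiv_le_0_compat; lra).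
  destruct (floor_nat _ Hq) as [k [Hk1 Hk2]]. exists k. split.
  - apply Rmult_le_compat_r with (r := delta) in Hk1; [|lra].
    replace (r / delta * delta) with r in Hk1 by (field; lra). exact Hk1.
  - rewrite <- Rpower_pow by lra. apply Rle_Rpower; [lra|]. rewrite S_INR. lra.
Qed.

(* Bookkeeping for one halving step: a bound total/2 + eta, rescaled by P >= 1. *)
Lemma rescale_half c total eta P :
  1 <= P -> 0 <= eta -> c <= total / 2 + eta -> c / P <= total / (2 * P) + eta.
Proof.
  intros HP He Hc.
  assert (H1 : c / P <= (total / 2 + eta) / P).
  { unfold Rdiv. apply Rmult_le_compat_r; [|lra]. left. apply Rinv_0_lt_compat. lra. }
  assert (H2 : (total / 2 + eta) / P = total / (2 * P) + eta / P) by (field; lra).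
  assert (H3 : eta / P <= eta).
  { unfold Rdiv. rewrite <- (Rmult_1_r eta) at 2. apply Rmult_le_compat_l; auto.
    rewrite <- Rinv_1. apply Rinv_le_contravar; lra. }
  lra.
Qed.

Section Geometry.

Context {X : Type} (d : X -> X -> R) (Hm : is_metric d).

Lemma dist_nonneg x y : 0 <= d x y.
Proof. apply Hm. Qed.

Lemma dist_self x : d x x = 0.
Proof. now apply Hm. Qed.

Lemma dist_sym x y : d x y = d y x.
Proof. apply Hm. Qed.

Lemma dist_tri x y z : d x z <= d x y + d y z.
Proof. apply Hm. Qed.

(** ** Geodesics *)

Lemma geo_dist x y gam s t :
  geodesic d x y gam -> 0 <= s <= d x y -> 0 <= t <= d x y ->
  d (gam s) (gam t) = Rabs (s - t).
Proof. intros [_ [_ H]] Hs Ht. now apply H. Qed.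

Lemma geo_rev x y gam :
  geodesic d x y gam -> geodesic d y x (fun s => gam (d x y - s)).
Proof.
  intros [H0 [H1 H2]]. unfold geodesic. rewrite (dist_sym y x). split; [|split].
  - now rewrite Rminus_0_r.
  - now rewrite Rminus_diag.
  - intros s t Hs Ht. rewrite H2 by lra.
    replace (d x y - s - (d x y - t)) with (- (s - t)) by ring. apply Rabs_Ropp.
Qed.

Lemma geo_from x y gam t :
  geodesic d x y gam -> 0 <= t <= d x y -> d x (gam t) = t.
Proof.
  intros Hg Ht. pose proof Hg as [H0 _]. rewrite <- H0 at 1.
  rewrite (geo_dist x y gam 0 t) by (auto; pose proof (dist_nonneg x y); lra).
  rewrite Rabs_minus_sym, Rminus_0_r. apply Rabs_pos_eq; lra.
Qed.

Lemma geo_to x y gam t :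
  geodesic d x y gam -> 0 <= t <= d x y -> d (gam t) y = d x y - t.
Proof.
  intros Hg Ht. pose proof Hg as [_ [H1 _]]. rewrite <- H1 at 1.
  rewrite (geo_dist x y gam t (d x y)) by (auto; lra).
  rewrite Rabs_minus_sym. apply Rabs_pos_eq; lra.
Qed.

Lemma geo_sub p q sig s0 s1 :
  geodesic d p q sig -> 0 <= s0 <= s1 -> s1 <= d p q ->
  geodesic d (sig s0) (sig s1) (fun s => sig (s0 + s)).
Proof.
  intros Hg H0 H1. pose proof Hg as [_ [_ Hd]].
  assert (E : d (sig s0) (sig s1) = s1 - s0).
  { rewrite Hd by lra. rewrite Rabs_minus_sym. apply Rabs_pos_eq; lra. }
  unfold geodesic. rewrite E. split; [|split].
  - f_equal; ring.
  - f_equal; ring.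
  - intros s t Hs Ht. rewrite Hd by lra. f_equal. ring.
Qed.

Lemma geo_image (f : X -> X) x y gam :
  (forall u v, d (f u) (f v) = d u v) ->
  geodesic d x y gam -> geodesic d (f x) (f y) (fun s => f (gam s)).
Proof.
  intros Hf [H0 [H1 H2]]. unfold geodesic. rewrite Hf. split; [|split].
  - now rewrite H0.
  - now rewrite H1.
  - intros s t Hs Ht. rewrite Hf. now apply H2.
Qed.

Lemma geo_near_point_time a p q sig t e :
  geodesic d p q sig -> 0 <= t <= d p q -> d (sig t) a <= e ->
  d a p - e <= t /\ d a q - e <= d p q - t.
Proof.
  intros Hsig Ht Hnear.
  pose proof (geo_from p q sig t Hsig Ht). pose proof (geo_to p q sig t Hsig Ht).
  pose proof (dist_tri a (sig t) p). pose proof (dist_tri a (sig t) q).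
  rewrite (dist_sym a (sig t)), (dist_sym (sig t) p) in *. lra.
Qed.

(** ** Discrete chains *)

Fixpoint csum (z : nat -> X) (i k : nat) : R :=
  match k with O => 0 | S k => d (z i) (z (S i)) + csum z (S i) k end.

Lemma csum_add z m : forall i p,
  csum z i (m + p) = csum z i m + csum z (i + m) p.
Proof.
  induction m as [|m IH]; intros i p; simpl.
  - rewrite Nat.add_0_r. ring.
  - rewrite IH. replace (S i + m)%nat with (i + S m)%nat by lia. ring.
Qed.

Lemma csum_last z i k :
  csum z i (S k) = csum z i k + d (z (i + k)%nat) (z (S (i + k))).
Proof. replace (S k) with (k + 1)%nat by lia. rewrite csum_add. simpl. ring. Qed.

Lemma csum_ext z z' : forall k i i',
  (forall j, (j <= k)%nat -> z (i + j)%nat = z' (i' + j)%nat) ->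
  csum z i k = csum z' i' k.
Proof.
  induction k as [|k IH]; intros i i' H; simpl; [reflexivity|].
  rewrite (IH (S i) (S i')).
  - f_equal. f_equal.
    + specialize (H 0%nat). rewrite !Nat.add_0_r in H. apply H; lia.
    + specialize (H 1%nat). rewrite !Nat.add_1_r in H. apply H; lia.
  - intros j Hj. replace (S i + j)%nat with (i + S j)%nat by lia.
    replace (S i' + j)%nat with (i' + S j)%nat by lia. apply H; lia.
Qed.

Lemma csum_nonneg z : forall k i, 0 <= csum z i k.
Proof.
  induction k as [|k IH]; intros i; simpl; [lra|].
  pose proof (dist_nonneg (z i) (z (S i))). specialize (IH (S i)). lra.
Qed.

Lemma csum_tri z : forall k i, d (z i) (z (i + k)%nat) <= csum z i k.
Proof.
  induction k as [|k IH]; intros i; simpl.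
  - rewrite Nat.add_0_r, dist_self. lra.
  - specialize (IH (S i)). replace (S i + k)%nat with (i + S k)%nat in IH by lia.
    pose proof (dist_tri (z i) (z (S i)) (z (i + S k)%nat)). lra.
Qed.

Lemma csum_prefix z i B : 0 <= B -> forall k,
  exists m, (m <= k)%nat /\ csum z i m <= B /\ (m = k \/ B < csum z i (S m)).
Proof.
  intros HB. induction k as [|k IH].
  - exists 0%nat. simpl. split; [lia|split; [lra|now left]].
  - destruct IH as [m [Hmk [H1 [H2|H2]]]].
    + subst m. destruct (Rle_lt_dec (csum z i (S k)) B).
      * exists (S k). split; [lia|split; [auto|now left]].
      * exists k. split; [lia|split; [auto|now right]].
    + exists m. split; [lia|split; [auto|now right]].
Qed.

Lemma csum_halve z eta i k :
  (forall j, d (z j) (z (S j)) <= eta) ->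
  exists m, (m <= k)%nat /\ csum z i m <= csum z i k / 2 /\
    csum z (i + m) (k - m) <= csum z i k / 2 + eta.
Proof.
  intros Hst.
  assert (HB : 0 <= csum z i k / 2) by (pose proof (csum_nonneg z k i); lra).
  destruct (csum_prefix z i _ HB k) as [m [Hmk [H1 H2]]].
  exists m. split; [auto|split; [auto|]].
  pose proof (csum_add z m i (k - m)) as E. replace (m + (k - m))%nat with k in E by lia.
  destruct H2 as [H2|H2].
  - subst m. rewrite Nat.sub_diag. simpl. pose proof (Hst 0%nat).
    pose proof (dist_nonneg (z 0%nat) (z 1%nat)). lra.
  - rewrite csum_last in H2. specialize (Hst (i + m)%nat). lra.
Qed.

Definition concat (z1 : nat -> X) (n1 : nat) (z2 : nat -> X) : nat -> X :=
  fun m => if Nat.leb m n1 then z1 m else z2 (m - n1)%nat.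

Lemma concat_all (P : X -> Prop) z1 n1 z2 :
  (forall j, P (z1 j)) -> (forall j, P (z2 j)) -> forall j, P (concat z1 n1 z2 j).
Proof. intros H1 H2 j. unfold concat. destruct (Nat.leb j n1); auto. Qed.

Lemma concat_steps eta z1 n1 z2 : z1 n1 = z2 O ->
  (forall j, d (z1 j) (z1 (S j)) <= eta) -> (forall j, d (z2 j) (z2 (S j)) <= eta) ->
  forall j, d (concat z1 n1 z2 j) (concat z1 n1 z2 (S j)) <= eta.
Proof.
  intros E H1 H2 j. unfold concat.
  destruct (Nat.leb_spec j n1); destruct (Nat.leb_spec (S j) n1); try lia.
  - auto.
  - replace j with n1 by lia. replace (S n1 - n1)%nat with 1%nat by lia. rewrite E. apply H2.
  - replace (S j - n1)%nat with (S (j - n1)) by lia. apply H2.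
Qed.

Lemma concat_csum z1 n1 z2 n2 : z1 n1 = z2 O ->
  csum (concat z1 n1 z2) 0 (n1 + n2) = csum z1 0 n1 + csum z2 0 n2.
Proof.
  intros E. rewrite csum_add. f_equal.
  - apply csum_ext. intros j Hj. unfold concat. simpl.
    destruct (Nat.leb_spec j n1); [reflexivity|lia].
  - apply csum_ext. intros j Hj. unfold concat. simpl.
    destruct (Nat.leb_spec (n1 + j) n1).
    + replace j with 0%nat by lia. rewrite Nat.add_0_r. exact E.
    + f_equal. lia.
Qed.

Lemma concat_end z1 n1 z2 n2 : z1 n1 = z2 O -> concat z1 n1 z2 (n1 + n2) = z2 n2.
Proof.
  intros E. unfold concat. destruct (Nat.leb_spec (n1 + n2) n1).
  - replace n2 with 0%nat by lia. rewrite Nat.add_0_r. exact E.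
  - f_equal. lia.
Qed.

(* The
   chain is indexed by all of nat, being constant after its last index. *)
Definition fine_chain (P : X -> Prop) (eta : R) (x y : X) (L : R) : Prop :=
  exists z n, z O = x /\ z n = y /\ (forall j, P (z j)) /\
    (forall j, d (z j) (z (S j)) <= eta) /\ csum z 0 n <= L.

Lemma fine_chain_weaken P eta x y L L' :
  L <= L' -> fine_chain P eta x y L -> fine_chain P eta x y L'.
Proof.
  intros HL [z [n [H0 [H1 [HP [Hst Hs]]]]]].
  exists z, n. repeat split; auto. lra.
Qed.

Lemma fine_chain_concat P eta x y w L1 L2 :
  fine_chain P eta x y L1 -> fine_chain P eta y w L2 -> fine_chain P eta x w (L1 + L2).
Proof.
  intros [z1 [n1 [A0 [A1 [AP [Ast As]]]]]] [z2 [n2 [B0 [B1 [BP [Bst Bs]]]]]].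
  assert (J : z1 n1 = z2 O) by congruence.
  exists (concat z1 n1 z2), (n1 + n2)%nat. split; [|split; [|split; [|split]]].
  - exact A0.
  - rewrite concat_end by exact J. exact B1.
  - now apply concat_all.
  - now apply concat_steps.
  - rewrite concat_csum by exact J. lra.
Qed.

(** ** Fine chains along geodesics and along paths *)

Definition geo_samples (gam : R -> X) (u0 u1 : R) (N : nat) : nat -> X :=
  fun m => gam (u0 + INR (Nat.min m N) / INR N * (u1 - u0)).

Lemma sample_frac N m : (1 <= N)%nat -> 0 <= INR (Nat.min m N) / INR N <= 1.
Proof.
  intros HN. assert (0 < INR N) by (apply lt_0_INR; lia).
  assert (INR (Nat.min m N) <= INR N) by (apply le_INR; lia).
  pose proof (pos_INR (Nat.min m N)).
  split; [apply Rdiv_le_0_compat; lra|].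
  apply Rmult_le_reg_r with (INR N); [lra|]. field_simplify; lra.
Qed.

Lemma convex_param u0 u1 D l :
  0 <= u0 <= D -> 0 <= u1 <= D -> 0 <= l <= 1 -> 0 <= u0 + l * (u1 - u0) <= D.
Proof. intros. split; nra. Qed.

Lemma geo_samples_step p q gam u0 u1 N :
  geodesic d p q gam -> 0 <= u0 <= d p q -> 0 <= u1 <= d p q -> (1 <= N)%nat -> forall m,
  d (geo_samples gam u0 u1 N m) (geo_samples gam u0 u1 N (S m)) =
  if Nat.ltb m N then Rabs (u1 - u0) / INR N else 0.
Proof.
  intros Hg H0 H1 HN m. assert (0 < INR N) by (apply lt_0_INR; lia).
  unfold geo_samples.
  rewrite (geo_dist p q gam) by first [exact Hg | apply convex_param; auto; apply sample_frac, HN].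
  destruct (Nat.ltb_spec m N).
  - rewrite !Nat.min_l by lia. rewrite S_INR.
    replace (u0 + INR m / INR N * (u1 - u0) - (u0 + (INR m + 1) / INR N * (u1 - u0)))
      with (- ((u1 - u0) / INR N)) by (field; lra).
    rewrite Rabs_Ropp. unfold Rdiv. rewrite Rabs_mult, (Rabs_pos_eq (/ INR N)); [reflexivity|].
    left. now apply Rinv_0_lt_compat.
  - rewrite !Nat.min_r by lia. rewrite Rminus_diag. apply Rabs_R0.
Qed.

Lemma geo_samples_csum p q gam u0 u1 N :
  geodesic d p q gam -> 0 <= u0 <= d p q -> 0 <= u1 <= d p q -> (1 <= N)%nat ->
  csum (geo_samples gam u0 u1 N) 0 N = Rabs (u1 - u0).
Proof.
  intros Hg H0 H1 HN. assert (0 < INR N) by (apply lt_0_INR; lia).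
  assert (Hk : forall k, (k <= N)%nat ->
            csum (geo_samples gam u0 u1 N) 0 k = INR k * (Rabs (u1 - u0) / INR N)).
  { induction k as [|k IH]; intros Hk; [simpl; ring|].
    rewrite csum_last, IH by lia. simpl Nat.add.
    rewrite (geo_samples_step p q gam u0 u1 N Hg H0 H1 HN k).
    destruct (Nat.ltb_spec k N); [|lia]. rewrite S_INR. ring. }
  rewrite Hk by lia. field. lra.
Qed.

Lemma fine_mesh A eta : 0 < eta -> exists N : nat, (1 <= N)%nat /\ A / INR N <= eta.
Proof.
  intros He. destruct (INR_unbounded (A / eta)) as [N0 HN0].
  exists (S N0). split; [lia|]. rewrite S_INR.
  assert (0 <= INR N0) by apply pos_INR.
  apply Rmult_le_reg_r with (INR N0 + 1); [lra|].
  apply Rmult_lt_compat_r with (r := eta) in HN0; [|lra].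
  field_simplify in HN0; [|lra]. field_simplify; nra.
Qed.

Lemma fine_chain_segment (P : X -> Prop) eta p q gam u0 u1 :
  geodesic d p q gam -> 0 <= u0 <= d p q -> 0 <= u1 <= d p q ->
  (forall l, 0 <= l <= 1 -> P (gam (u0 + l * (u1 - u0)))) -> 0 < eta ->
  fine_chain P eta (gam u0) (gam u1) (Rabs (u1 - u0)).
Proof.
  intros Hg H0 H1 HP He.
  destruct (fine_mesh (Rabs (u1 - u0)) eta He) as [N [HN HNe]].
  assert (0 < INR N) by (apply lt_0_INR; lia).
  exists (geo_samples gam u0 u1 N), N. split; [|split; [|split; [|split]]].
  - unfold geo_samples. simpl. f_equal. unfold Rdiv. ring.
  - unfold geo_samples. rewrite Nat.min_id. f_equal. field. lra.
  - intros j. apply HP, sample_frac, HN.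
  - intros j. rewrite (geo_samples_step p q gam u0 u1 N Hg H0 H1 HN j).
    destruct (Nat.ltb j N); lra.
  - rewrite (geo_samples_csum p q gam u0 u1 N Hg H0 H1 HN). lra.
Qed.

Lemma fine_chain_geodesic (P : X -> Prop) eta p q gam :
  geodesic d p q gam -> (forall u, 0 <= u <= d p q -> P (gam u)) -> 0 < eta ->
  fine_chain P eta p q (d p q).
Proof.
  intros Hg HP He. pose proof (dist_nonneg p q).
  pose proof (fine_chain_segment P eta p q gam 0 (d p q) Hg ltac:(lra) ltac:(lra)) as Hc.
  destruct Hg as [G0 [G1 _]]. rewrite G0, G1, Rminus_0_r, Rabs_pos_eq in Hc by lra.
  apply Hc; [|exact He]. intros l Hl. apply HP. nra.
Qed.

Lemma part_range t n : partition01 t n -> forall i, (i <= n)%nat -> 0 <= t i <= 1.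
Proof.
  intros [H0 [H1 H2]].
  assert (Hlo : forall i, (i <= n)%nat -> t O <= t i).
  { induction i as [|i IH]; intros Hi; [lra|]. specialize (H2 i ltac:(lia)). specialize (IH ltac:(lia)). lra. }
  assert (Hhi : forall j i, (i + j = n)%nat -> t i <= t n).
  { induction j as [|j IH]; intros i Hi.
    - rewrite Nat.add_0_r in Hi. subst. lra.
    - specialize (IH (S i) ltac:(lia)). specialize (H2 i ltac:(lia)). lra. }
  intros i Hi. split.
  - rewrite <- H0. now apply Hlo.
  - rewrite <- H1. apply (Hhi (n - i)%nat i). lia.
Qed.

Definition fine_reachable (c : R -> X) (eta s : R) : Prop :=
  0 <= s <= 1 /\ exists (t : nat -> R) (n : nat), t O = 0 /\ t n = s /\
    (forall i, (i < n)%nat -> t i <= t (S i)) /\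
    (forall i, (i < n)%nat -> d (c (t i)) (c (t (S i))) <= eta).

Lemma fine_reachable_extend c eta s1 u :
  fine_reachable c eta s1 -> s1 <= u <= 1 -> d (c s1) (c u) <= eta -> fine_reachable c eta u.
Proof.
  intros [[Hs1 _] [t [n [T0 [Tn [Tm Td]]]]]] Hu Hstep.
  split; [lra|]. exists (fun i => if Nat.leb i n then t i else u), (S n).
  split; [|split; [|split]].
  - exact T0.
  - destruct (Nat.leb_spec (S n) n); [lia|reflexivity].
  - intros i Hi. destruct (Nat.leb_spec i n); destruct (Nat.leb_spec (S i) n); try lia.
    + apply Tm; lia.
    + replace i with n by lia. lra.
  - intros i Hi. destruct (Nat.leb_spec i n); destruct (Nat.leb_spec (S i) n); try lia.
    + apply Td; lia.
    + replace i with n by lia. now rewrite Tn.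
Qed.

(* A continuous path can be sampled along a partition of [0,1] with steps at
   most eta: by continuity at the supremum s of the reachable parameters,
   some reachable s1 close to s extends to some u >= s, and u must be 1. *)
Lemma discretize c eta : path_continuous d c -> 0 < eta ->
  exists t n, partition01 t n /\ forall i, (i < n)%nat -> d (c (t i)) (c (t (S i))) <= eta.
Proof.
  intros Hc He.
  assert (HA0 : fine_reachable c eta 0).
  { split; [lra|]. exists (fun _ => 0), O. repeat split; intros; lia. }
  assert (Hb : bound (fine_reachable c eta)) by (exists 1; intros x [Hx _]; lra).
  destruct (completeness _ Hb (ex_intro _ 0 HA0)) as [s [Hub Hlub]].
  assert (Hs0 : 0 <= s) by (apply Hub; auto).
  assert (Hs1 : s <= 1) by (apply Hlub; intros x [Hx _]; lra).
  destruct (Hc s (conj Hs0 Hs1) (eta / 2) ltac:(lra)) as [e0 [He0 Hcont]].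
  destruct (classic (exists s1, fine_reachable c eta s1 /\ s - e0 < s1)) as [[s1 [HA1 Hlt]]|Hn].
  2: { exfalso. assert (s <= s - e0); [|lra]. apply Hlub. intros x Hx.
       destruct (Rle_lt_dec x (s - e0)); auto. exfalso. apply Hn. now exists x. }
  assert (Hs1s : s1 <= s) by (apply Hub; auto).
  set (u := Rmin 1 (s + e0 / 2)).
  assert (Hu : s <= u <= s + e0 / 2 /\ u <= 1).
  { unfold u, Rmin. destruct (Rle_dec 1 (s + e0 / 2)); lra. }
  assert (HAu : fine_reachable c eta u).
  { apply (fine_reachable_extend c eta s1); [exact HA1|destruct HA1 as [[_ ?] _]; lra|].
    assert (d (c s1) (c s) < eta / 2) by (apply Hcont; [destruct HA1 as [? _]; lra|apply Rabs_def1; lra]).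
    assert (d (c u) (c s) < eta / 2) by (apply Hcont; [lra|apply Rabs_def1; lra]).
    pose proof (dist_tri (c s1) (c s) (c u)). rewrite (dist_sym (c s) (c u)) in *. lra. }
  assert (Hus : u <= s) by (apply Hub; auto).
  assert (Hu1 : u = 1) by (unfold u, Rmin in *; destruct (Rle_dec 1 (s + e0 / 2)); lra).
  rewrite Hu1 in HAu. destruct HAu as [_ [t' [n' [A0 [A1 [A2 A3]]]]]].
  exists t', n'. repeat split; auto.
Qed.

Lemma lub_ge (E : Rbar -> Prop) x : E x -> Rbar_le x (Rbar_lub E).
Proof. intros H. unfold Rbar_lub. destruct (Rbar_ex_lub E) as [l Hl]. now apply (proj1 Hl). Qed.

Lemma glb_ge (E : Rbar -> Prop) x : (forall y, E y -> Rbar_le x y) -> Rbar_le x (Rbar_glb E).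
Proof. intros H. unfold Rbar_glb. destruct (Rbar_ex_glb E) as [l Hl]. now apply (proj2 Hl). Qed.

Lemma fine_chain_path (P : X -> Prop) eta c :
  path_continuous d c -> (forall s, 0 <= s <= 1 -> P (c s)) -> 0 < eta ->
  exists L, Rbar_le (Finite L) (path_length d c) /\ fine_chain P eta (c 0) (c 1) L.
Proof.
  intros Hc HP He. destruct (discretize c eta Hc He) as [t [n [Hpart Hsteps]]].
  set (z := fun m => c (t (Nat.min m n))).
  exists (poly_sum d c t n). split.
  { apply lub_ge. now exists t, n. }
  pose proof Hpart as [T0 [T1 _]].
  exists z, n. split; [|split; [|split; [|split]]].
  - unfold z. simpl. now rewrite T0.
  - unfold z. now rewrite Nat.min_id, T1.
  - intros j. apply HP, (part_range t n Hpart). lia.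
  - intros j. unfold z. destruct (Nat.ltb_spec j n).
    + rewrite !Nat.min_l by lia. auto.
    + rewrite !Nat.min_r by lia. rewrite dist_self. lra.
  - assert (Hk : forall k, (k <= n)%nat -> csum z 0 k = poly_sum d c t k).
    { induction k as [|k IH]; intros Hk; [reflexivity|].
      rewrite csum_last, IH by lia. simpl. unfold z. now rewrite !Nat.min_l by lia. }
    rewrite Hk by lia. lra.
Qed.

(** ** Hyperbolic estimates *)

Section Hyperbolic.

Context (delta : R) (Hdelta : 0 < delta) (Hthin : triangles_thin d delta)
        (Hgeod : geodesic_space d).

Lemma slim u v w al be ga t :
  geodesic d u v al -> geodesic d u w be -> geodesic d w v ga -> 0 <= t <= d u v ->
  (exists s, 0 <= s <= d u w /\ d (al t) (be s) <= delta) \/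
  (exists s, 0 <= s <= d w v /\ d (al t) (ga s) <= delta).
Proof.
  intros Hal Hbe Hga Ht. pose proof (dist_tri u w v) as Htri.
  destruct (Rle_lt_dec t (gromov d v w u)) as [Hle|Hlt]; unfold gromov in *.
  - left. exists t. split; [rewrite (dist_sym v w) in Hle; lra|].
    apply (Hthin u v w al be Hal Hbe t). unfold gromov. lra.
  - right. set (t' := d u v - t).
    assert (Ht' : 0 <= t' <= gromov d u w v).
    { unfold t', gromov. rewrite (dist_sym v u). lra. }
    pose proof (Hthin v u w _ _ (geo_rev u v al Hal) (geo_rev w v ga Hga) t' Ht') as H.
    simpl in H. unfold t' in H. replace (d u v - (d u v - t)) with t in H by ring.
    exists (d w v - t'). split; [|exact H].
    unfold t', gromov in *. rewrite (dist_sym v w) in *. lra.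
Qed.

Lemma isosceles_fellow_travel a b b' al sig s :
  geodesic d a b al -> geodesic d b b' sig -> d a b' = d a b -> 0 <= s <= d b b' / 2 ->
  d (al (d a b - s)) (sig s) <= delta.
Proof.
  intros Hal Hsig Hiso Hs.
  apply (Hthin b a b' _ sig (geo_rev a b al Hal) Hsig s).
  unfold gromov. rewrite (dist_sym b a), Hiso. lra.
Qed.

(* If a chain with
   steps at most eta stays at distance >= r from a, then a geodesic between
   two of its points stays at distance >= r - k delta - l / 2^(k+1) - k eta,
   l the length of the chain in between: halve the chain, and use slimness
   of the triangle formed by the geodesic and geodesics to the split point. *)
Lemma geodesic_far_from_chain a r eta z :
  0 <= eta -> (forall j, r <= d a (z j)) -> (forall j, d (z j) (z (S j)) <= eta) ->
  forall k i len gam t,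
  geodesic d (z i) (z (i + len)%nat) gam -> 0 <= t <= d (z i) (z (i + len)%nat) ->
  r - INR k * delta - csum z i len / 2 ^ (S k) - INR k * eta <= d a (gam t).
Proof.
  intros He Hfar Hst.
  induction k as [|k IH]; intros i len gam t Hgam Ht.
  - simpl. pose proof (geo_from _ _ gam t Hgam Ht). pose proof (geo_to _ _ gam t Hgam Ht).
    pose proof (csum_tri z len i).
    pose proof (dist_tri a (gam t) (z i)). pose proof (dist_tri a (gam t) (z (i + len)%nat)).
    rewrite (dist_sym (gam t) (z i)) in *. pose proof (Hfar i). pose proof (Hfar (i + len)%nat). lra.
  - destruct (csum_halve z eta i len Hst) as [m [Hml [H1 H2]]].
    destruct (Hgeod (z i) (z (i + m)%nat)) as [be Hbe].
    destruct (Hgeod (z (i + m)%nat) (z (i + len)%nat)) as [ga Hga].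
    assert (HP : 1 <= 2 ^ S k) by apply pow2_ge1.
    replace (2 ^ S (S k)) with (2 * 2 ^ S k) by (simpl; ring).
    rewrite S_INR, !Rmult_plus_distr_r, !Rmult_1_l.
    destruct (slim _ _ _ gam be ga t Hgam Hbe Hga Ht) as [[s [Hs1 Hs2]]|[s [Hs1 Hs2]]].
    +
      specialize (IH i m be s Hbe Hs1).
      pose proof (dist_tri a (gam t) (be s)).
      pose proof (rescale_half (csum z i m) (csum z i len) 0 _ HP (Rle_refl 0) ltac:(lra)).
      assert (0 <= eta * INR k) by (apply Rmult_le_pos; auto; apply pos_INR). lra.
    +
      assert (Elen : (i + m + (len - m))%nat = (i + len)%nat) by lia.
      rewrite <- Elen in Hga, Hs1.
      specialize (IH (i + m)%nat (len - m)%nat ga s Hga Hs1).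
      pose proof (dist_tri a (gam t) (ga s)).
      pose proof (rescale_half _ (csum z i len) eta _ HP He H2). lra.
Qed.

Lemma fine_chain_far a r eta p q len gam t :
  fine_chain (fun w => r <= d a w) eta p q len ->
  geodesic d p q gam -> 0 <= t <= d p q -> forall k : nat,
  r - INR k * delta - len / 2 ^ (S k) - INR k * eta <= d a (gam t).
Proof.
  intros [z [n [Z0 [Zn [Hfar [Hst HS]]]]]] Hgam Ht k.
  assert (He : 0 <= eta) by (pose proof (Hst O); pose proof (dist_nonneg (z O) (z 1%nat)); lra).
  rewrite <- Z0, <- Zn in Hgam, Ht.
  pose proof (geodesic_far_from_chain a r eta z He Hfar Hst k 0 n gam t Hgam Ht).
  assert (csum z 0 n / 2 ^ S k <= len / 2 ^ S k).
  { pose proof (pow2_ge1 (S k)). unfold Rdiv. apply Rmult_le_compat_r; [|exact HS].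
    left. apply Rinv_0_lt_compat. lra. }
  lra.
Qed.

Lemma fine_chain_hop a r e eta p q :
  d p q <= e -> r + e <= d a p \/ r + e <= d a q -> 0 < eta ->
  fine_chain (fun w => r <= d a w) eta p q e.
Proof.
  intros Hpq Hfar He. destruct (Hgeod p q) as [gm Hgm].
  apply (fine_chain_weaken _ _ _ _ _ _ Hpq), (fine_chain_geodesic _ _ _ _ gm Hgm); auto.
  intros u Hu. pose proof (geo_from _ _ gm u Hgm Hu). pose proof (geo_to _ _ gm u Hgm Hu).
  pose proof (dist_tri a (gm u) p). pose proof (dist_tri a (gm u) q).
  rewrite (dist_sym (gm u) p) in *. lra.
Qed.

(** ** Detours around a ball

   With s0 = d a b - R0 - delta, the points [sig s0] and
   [sig (d b b' - s0)] are delta-close to [al (R0 + delta)] and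
   [be (R0 + delta)]; closing up c with these short segments gives a fine
   chain outside B(a, R0) joining two points of [sig]. *)

Lemma detour_chain a b b' al be sig R0 c eta :
  geodesic d a b al -> geodesic d a b' be -> geodesic d b b' sig -> d a b' = d a b ->
  0 <= R0 -> 0 <= d a b - R0 - delta <= d b b' / 2 ->
  path_continuous d c -> c 0 = al R0 -> c 1 = be R0 ->
  (forall s, 0 <= s <= 1 -> ~ open_ball d a R0 (c s)) -> 0 < eta ->
  exists Lc, Rbar_le (Finite Lc) (path_length d c) /\
    fine_chain (fun w => R0 <= d a w) eta
      (sig (d a b - R0 - delta)) (sig (d b b' - (d a b - R0 - delta))) (Lc + 4 * delta).
Proof.
  intros Hal Hbe Hsig Hiso HR0 Hs0 Hc Hc0 Hc1 Hout He.
  set (D := d a b) in *. set (L := d b b') in *. set (s0 := D - R0 - delta) in *.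
  set (P := fun w => R0 <= d a w).
  assert (HRD : R0 + delta <= D) by (unfold s0 in Hs0; lra).
  assert (HaR : forall u, 0 <= u <= D -> d a (al u) = u) by (intros; now apply (geo_from a b)).
  assert (HbR : forall u, 0 <= u <= D -> d a (be u) = u)
    by (intros; apply (geo_from a b' be); auto; rewrite Hiso; lra).
  assert (Hx : d (sig s0) (al (R0 + delta)) <= delta).
  { rewrite dist_sym. replace (R0 + delta) with (D - s0) by (unfold s0; ring).
    now apply (isosceles_fellow_travel a b b'). }
  assert (Hy : d (be (R0 + delta)) (sig (L - s0)) <= delta).
  { replace (R0 + delta) with (d a b' - s0) by (unfold s0; lra).
    apply (isosceles_fellow_travel a b' b be (fun s => sig (d b b' - s)) s0 Hbe).
    - now apply geo_rev.
    - now symmetry.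
    - rewrite (dist_sym b' b). exact Hs0. }
  (* the five pieces: hop, radial segment of al, c, radial segment of be, hop *)
  assert (C1 : fine_chain P eta (sig s0) (al (R0 + delta)) delta)
    by (apply fine_chain_hop; auto; right; rewrite HaR; lra).
  assert (C2 : fine_chain P eta (al (R0 + delta)) (al R0) delta).
  { apply (fine_chain_weaken _ _ _ _ (Rabs (R0 - (R0 + delta))));
      [rewrite Rabs_minus_sym, Rabs_pos_eq; lra|].
    apply (fine_chain_segment _ _ a b); auto; try (fold D; lra).
    intros l Hl. unfold P. rewrite HaR; nra. }
  destruct (fine_chain_path P eta c Hc) as [Lc [HLc C3]]; auto.
  { intros s Hs. specialize (Hout s Hs). unfold open_ball, P in *. rewrite dist_sym. lra. }
  rewrite Hc0, Hc1 in C3.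
  assert (C4 : fine_chain P eta (be R0) (be (R0 + delta)) delta).
  { apply (fine_chain_weaken _ _ _ _ (Rabs (R0 + delta - R0))); [rewrite Rabs_pos_eq; lra|].
    apply (fine_chain_segment _ _ a b'); auto; try (rewrite Hiso; lra).
    intros l Hl. unfold P. rewrite HbR; nra. }
  assert (C5 : fine_chain P eta (be (R0 + delta)) (sig (L - s0)) delta)
    by (apply fine_chain_hop; auto; left; rewrite HbR; lra).
  exists Lc. split; [exact HLc|].
  apply (fine_chain_weaken P eta _ _ (delta + delta + Lc + delta + delta)); [lra|].
  repeat eapply fine_chain_concat; eauto.
Qed.

(* A detour avoiding B(a, R0) is exponentially long in R0 / delta: the fine
   chain of [detour_chain] forces every point of the middle part of [sig] to
   be far from a, while [sig] comes within 1 of a. *)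
Lemma detour_length a b b' al be sig R0 c t0 :
  geodesic d a b al -> geodesic d a b' be -> geodesic d b b' sig ->
  d a b' = d a b -> 2 <= R0 -> R0 + delta <= d a b ->
  d a b - R0 - delta <= t0 <= d b b' - (d a b - R0 - delta) -> d (sig t0) a <= 1 ->
  path_continuous d c -> c 0 = al R0 -> c 1 = be R0 ->
  (forall s, 0 <= s <= 1 -> ~ open_ball d a R0 (c s)) ->
  Rbar_le (Finite (Rpower 2 ((R0 - 2) / delta) - 1 - 4 * delta)) (path_length d c).
Proof.
  intros Hal Hbe Hsig Hiso HR0 HRD Ht0 Hnear Hc Hc0 Hc1 Hout.
  set (s0 := d a b - R0 - delta) in *.
  destruct (exponent_choice (R0 - 2) delta ltac:(lra) Hdelta) as [k [Hkd HPow]].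
  set (P := 2 ^ S k). assert (HP1 : 1 <= P) by apply pow2_ge1.
  pose proof (pos_INR k) as Hk0.
  set (eta := 1 / (P * (INR k + 1))).
  assert (Heta : 0 < eta) by (apply Rdiv_lt_0_compat; nra).
  assert (HPke : P * (INR k * eta) <= 1).
  { unfold eta. replace (P * (INR k * (1 / (P * (INR k + 1))))) with (INR k / (INR k + 1))
      by (field; lra).
    apply Rmult_le_reg_r with (INR k + 1); [lra|].
    unfold Rdiv. rewrite Rmult_assoc, Rinv_l by lra. lra. }
  destruct (detour_chain a b b' al be sig R0 c eta Hal Hbe Hsig Hiso ltac:(lra)
              ltac:(unfold s0 in *; lra) Hc Hc0 Hc1 Hout Heta) as [Lc [HLc Hch]].
  pose proof (geo_sub b b' sig s0 (d b b' - s0) Hsig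
                ltac:(unfold s0 in *; lra) ltac:(unfold s0 in *; lra)) as Hsub.
  assert (Hmid : 0 <= t0 - s0 <= d (sig s0) (sig (d b b' - s0))).
  { rewrite (geo_dist b b' sig) by (auto; unfold s0 in *; lra).
    rewrite Rabs_minus_sym, Rabs_pos_eq; unfold s0 in *; lra. }
  pose proof (fine_chain_far a R0 eta _ _ _ _ _ Hch Hsub Hmid k) as Hfar.
  cbv beta in Hfar. replace (s0 + (t0 - s0)) with t0 in Hfar by ring.
  rewrite dist_sym in Hnear.
  (* hence (Lc + 4 delta) / P >= 1 - k eta, i.e. Lc + 4 delta >= P - 1 *)
  assert (HQ : 1 - INR k * eta <= (Lc + 4 * delta) / P) by (fold P in Hfar; lra).
  set (Q := (Lc + 4 * delta) / P) in HQ.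
  assert (HLQ : Lc + 4 * delta = P * Q) by (unfold Q; field; lra).
  assert (P * (1 - INR k * eta) <= P * Q) by (apply Rmult_le_compat_l; lra).
  apply Rbar_le_trans with (2 := HLc). simpl. fold P in HPow. nra.
Qed.

End Hyperbolic.

(** ** Projections to spheres *)

Lemma proj_geodesic p r x gam :
  geodesic d p x gam -> 0 <= r <= d p x -> proj d p r x (gam r).
Proof.
  intros Hg Hr. exists gam. split; [exact Hg|]. exists r. split; [exact Hr|]. split; [reflexivity|].
  unfold sphere. rewrite dist_sym. now apply (geo_from p x).
Qed.

Lemma sphere_dist_le_dproj p r x y z1 z2 :
  proj d p r x z1 -> proj d p r y z2 -> Rbar_le (sphere_dist d p r z1 z2) (dproj d p r x y).
Proof. intros H1 H2. apply lub_ge. exists z1, z2. auto. Qed.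

End Geometry.

Theorem lemma3p7
  (X : Type) (d : X -> X -> R) (delta : R)
  (G : Type) (mul : G -> G -> G) (inv : G -> G) (one : G) (act : G -> X -> X)
  (C : X -> Prop) (Gc : X -> G -> Prop) (rho R0 : R)
  (Hmetric : is_metric d) (Hgeod : geodesic_space d)
  (Hdelta : 0 < delta) (Hthin : triangles_thin d delta)
  (Hgroup : is_group mul inv one) (Hact : isometric_action mul one d act)
  (Hfam : fairly_rotating_family mul inv one d act C Gc rho)
  (Hrho : 20 * delta <= rho)
  (HR : 2 + 2 * delta <= R0 /\ R0 <= rho / 2 - 3 * delta)
  (a b : X) (g : G) (Ha : C a) (Hb : C b) (Hab : a <> b)
  (Hg : Gc a g) (Hg1 : g <> one) :
  Rbar_le (Finite (Rpower 2 ((R0 - 2) / delta) - 4 - 6 * delta))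
          (dproj d a R0 b (act g b)).
Proof.
  destruct Hact as [_ [_ Hiso]]. destruct Hfam as [_ [_ [Hfix [_ [Hsep Hrot]]]]].
  assert (Hga : act g a = a) by auto.
  assert (HD : rho <= d a b) by auto.
  assert (HDg : d a (act g b) = d a b) by (rewrite <- Hga at 1; apply Hiso).
  (* the rotation moves b along a geodesic passing within 1 of a *)
  destruct (Hrot a g b Ha Hg Hg1 Hb (fun E => Hab (eq_sym E))) as [sig [Hsig [t0 [Ht0 Hnear]]]].
  destruct (geo_near_point_time d Hmetric a b (act g b) sig t0 1 Hsig Ht0 Hnear) as [T1 T2].
  destruct (Hgeod a b) as [al Hal].
  pose proof (geo_image d (act g) a b al (Hiso g) Hal) as Hbe. rewrite Hga in Hbe.
  pose proof (dist_nonneg d Hmetric a b).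
  (* al R0 and g (al R0) lie in pi_a(b) and pi_a(g b) *)
  apply Rbar_le_trans with (sphere_dist d a R0 (al R0) (act g (al R0))).
  2: { apply sphere_dist_le_dproj.
       - apply (proj_geodesic d Hmetric a R0 b al); auto; lra.
       - apply (proj_geodesic d Hmetric a R0 (act g b) (fun s => act g (al s))); auto; lra. }
  (* every path between them outside B_R(a) is a long detour *)
  apply glb_ge. intros l [c [Hc [Hc0 [Hc1 [Hout ->]]]]].
  eapply Rbar_le_trans;
    [|apply (detour_length d Hmetric delta Hdelta Hthin Hgeod a b (act g b)
               al (fun s => act g (al s)) sig R0 c t0); auto; lra].
  simpl. lra.
Qed.
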